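(* Let $n$ be a positive integer and $m=n+1$. Then for every zero-normalized $\Gamma_{m,n}$-semimodule $\Delta$, the Young diagrams $G_{n+1}(\Delta)$ and $G_n(\Delta)$ coincide (as partitions, i.e. ignoring columns of height zero).
   Context: Let $m,n$ be coprime positive integers and $\Gamma=\{am+bn:a,b\in\mathbb{Z}_{\ge0}\}$. A $\Gamma$-semimodule is $\Delta\subset\mathbb{Z}_{\ge0}$ with $\Delta+\Gamma\subset\Delta$; zero-normalized means $\min\Delta=0$. For $p\in\{m,n\}$, a $p$-generator of $\Delta$ is $a\in\Delta$ with $a-p\notin\Delta$; there are exactly $p$ of them. With $a_1<\dots<a_m$ the $m$-generators and $b_1<\dots<b_n$ the $n$-generators, put $g_m(x)=\#(([x,x+n)\cap\mathbb{Z})\setminus\Delta)$, $g_n(x)=\#(([x,x+m)\cap\mathbb{Z})\setminus\Delta)$. $G_m(\Delta)$ is the Young diagram with column heights $g_m(a_1)\ge\dots\ge g_m(a_m)$, and $G_n(\Delta)$ is the Young diagram with column heights $g_n(b_1)\ge\dots\ge g_n(b_n)$. *)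

From mathcomp Require Import all_boot.
Set Implicit Arguments. Unset Strict Implicit. Unset Printing Implicit Defensive.

(* A subset Delta of Z_{>=0} is represented by a boolean predicate on nat. *)

Definition inGamma (m n x : nat) : Prop := exists a b : nat, x = a * m + b * n.

Definition is_semimodule (m n : nat) (D : pred nat) : Prop :=
  forall x g, D x -> inGamma m n g -> D (x + g).

(* min Delta = 0 (for a subset of Z_{>=0} this is just 0 \in Delta) *)
Definition zero_normalized (D : pred nat) : Prop := D 0.

(* a is a p-generator: a \in Delta and a - p \notin Delta
   (a - p < 0 is automatically outside Delta \subset Z_{>=0}) *)
Definition is_gen (D : pred nat) (p a : nat) : bool :=
  D a && ((a < p) || ~~ D (a - p)).

(* For a zero-normalized
   Gamma_{m,n}-semimodule every p-generator (p \in {m,n}) is < m*n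
   (it is the minimum of its residue class mod p, which contains one of
   0, q, 2q, ..., (p-1)q with q the other generator), so scanning
   [0, m*n) enumerates all of them. *)
Definition gens (m n : nat) (D : pred nat) (p : nat) : seq nat :=
  [seq a <- iota 0 (m * n) | is_gen D p a].

Definition gapcount (D : pred nat) (len x : nat) : nat :=
  count (fun y => ~~ D y) (iota x len).

Definition partition_of (hs : seq nat) : seq nat :=
  sort geq [seq h <- hs | h != 0].

Definition G_m (m n : nat) (D : pred nat) : seq nat :=
  partition_of [seq gapcount D n a | a <- gens m n D m].

Definition G_n (m n : nat) (D : pred nat) : seq nat :=
  partition_of [seq gapcount D m b | b <- gens m n D n].

From mathcomp Require Import all_boot.
From mathcomp Require Import zify.

Set Implicit Arguments.
Unset Strict Implicit.
Unset Printing Implicit Defensive.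

(* Write f x for the number of gaps of Delta in [x, x + n).  For x in Delta
   both x + n and x + n + 1 lie in Delta, so f x = f (x + 1) = g_n x = g_m x:
   f is constant along each maximal run of consecutive elements of Delta, and
   it gives the heights of both diagrams.  Inside a run, a is an
   (n+1)-generator iff a - 1 is an n-generator; in addition the first element
   of every run is an (n+1)-generator and the last one an n-generator.  So each
   run carries as many (n+1)- as n-generators, all of the same height f.  The
   count is made rigorous by telescoping along [0, n(n+1)), whose right end
   lies beyond the conductor n(n-1) where f vanishes. *)

Lemma count_add_pred {T : Type} {a b c : pred T} :
  (forall x, a x = b x + c x :> nat) ->
  forall s : seq T, count a s = count b s + count c s.
Proof. by move=> abc; elim => //= x s ->; rewrite abc addnACA. Qed.

Lemma count_iota_telescope {a b : pred nat} {phi : nat -> nat} :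
  (forall x, a x + phi x.+1 = b x + phi x) ->
  forall N, count a (iota 0 N) + phi N = count b (iota 0 N) + phi 0.
Proof.
move=> step; elim=> [//|N IH].
rewrite -addn1 iotaD !count_cat /= !addn0 add0n addn1.
have := step N; lia.
Qed.

Lemma partition_of_eq (s t : seq nat) :
  (forall k, 0 < k -> count_mem k s = count_mem k t) ->
  partition_of s = partition_of t.
Proof.
move=> cnt; apply/perm_sortP.
- by move=> x y; apply: leq_total.
- by move=> x y z yx zy; apply: leq_trans zy yx.
- by move=> x y /andP[yx xy]; apply/anti_leq/andP.
apply/allP => k _ /=; apply/eqP; rewrite !count_filter.
case: k => [|k]; last first.
  by rewrite !(eq_count (a2 := pred1 k.+1)) ?cnt // => x /=; case: eqP => [->|].
by rewrite !(eq_count (a2 := pred0)) ?count_pred0 // => x /=; rewrite andbN.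
Qed.

Lemma inGamma_conductor (n x : nat) : n * n.-1 <= x -> inGamma n.+1 n x.
Proof.
case: n => [|n] le_x; first by exists x, 0; rewrite muln1 addn0.
exists (x %% n.+1), (x %/ n.+1 - x %% n.+1).
have r_lt := ltn_pmod x (ltn0Sn n).
have q_ge : n <= x %/ n.+1 by rewrite leq_divRL // mulnC.
rewrite {1}(divn_eq x n.+1) mulnBl mulnSr.
have : x %% n.+1 * n.+1 <= x %/ n.+1 * n.+1 by apply: leq_mul => //; lia.
lia.
Qed.

Section Runs.

Variables (n : nat) (D : pred nat).
Hypothesis HD : is_semimodule n.+1 n D.

Local Notation f := (gapcount D n).

Lemma mem_addn {x} : D x -> D (x + n).
Proof. by move=> Dx; apply: HD Dx _; exists 0, 1; rewrite mul1n. Qed.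

Lemma mem_addSn {x} : D x -> D (x + n.+1).
Proof. by move=> Dx; apply: HD Dx _; exists 1, 0; rewrite mul1n addn0. Qed.

Lemma gapcount_succ x : D x -> f x.+1 = f x.
Proof.
move=> Dx; have split_last : iota x n.+1 = iota x n ++ [:: x + n] by rewrite -addn1 iotaD.
move: (congr1 (count (fun y => ~~ D y)) split_last).
by rewrite /= count_cat /= Dx (mem_addn Dx) /= !addn0 add0n.
Qed.

Lemma gapcount_Sn x : D x -> gapcount D n.+1 x = f x.
Proof. by move=> Dx; rewrite /gapcount -addn1 iotaD count_cat /= (mem_addn Dx) !addn0. Qed.

Lemma is_genSn_succ x : D x -> is_gen D n.+1 x.+1 = D x.+1 && is_gen D n x.
Proof. by move=> Dx; rewrite /is_gen Dx ltnS subSS. Qed.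

Lemma is_genSn_run_start x : ~~ D x -> is_gen D n.+1 x.+1 = D x.+1.
Proof.
move=> Dx; rewrite /is_gen ltnS subSS; case: (D x.+1) => //=.
apply/orP; case: (leqP n x) => [le_nx|]; last by left.
by right; apply: contra Dx => /mem_addn; rewrite subnK.
Qed.

Lemma is_gen_run_end x : ~~ D x.+1 -> is_gen D n x = D x.
Proof.
move=> Dx; rewrite /is_gen; case: (D x) => //=.
apply/orP; case: (leqP n x) => [le_nx|]; last by left.
by right; apply: contra Dx => /mem_addSn; rewrite addnS subnK.
Qed.

Lemma gapcount_conductor x : D 0 -> n * n.-1 <= x -> f x = 0.
Proof.
move=> D0 le_x; rewrite /gapcount (eq_in_count (a2 := pred0)) ?count_pred0 // => y.
rewrite mem_iota => /andP[le_xy _].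
by have := HD D0 (@inGamma_conductor n y (leq_trans le_x le_xy)); rewrite add0n => ->.
Qed.

Variable k : nat.

Definition prev_mem x := (0 < x) && D x.-1.

Definition mgen_of_height x := is_gen D n.+1 x && (f x == k).
Definition ngen_of_height x := is_gen D n x && (f x == k).
Definition run_start x := [&& D x, ~~ prev_mem x & f x == k].
Definition run_end x := [&& D x, ~~ D x.+1 & f x == k].
Definition run_inner x := [&& D x, prev_mem x & f x == k].
Definition ngen_inner x := [&& D x.+1, is_gen D n x & f x == k].
Definition mgen_inner x := (0 < x) && ngen_inner x.-1.

Lemma mgen_of_heightE x : mgen_of_height x = run_start x + mgen_inner x :> nat.
Proof.
rewrite /mgen_of_height /run_start /mgen_inner /ngen_inner /prev_mem.
case: x => [|x] /=; first by rewrite /is_gen /= andbT addn0.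
case Dx: (D x) => /=.
  by rewrite is_genSn_succ // gapcount_succ // andbF andbA.
by rewrite is_genSn_run_start ?Dx // /is_gen Dx /= andbF addn0.
Qed.

Lemma ngen_of_heightE x : ngen_of_height x = run_end x + ngen_inner x :> nat.
Proof.
rewrite /ngen_of_height /run_end /ngen_inner.
case DSx: (D x.+1) => /=; first by rewrite andbF.
by rewrite is_gen_run_end ?DSx // addn0.
Qed.

Lemma run_end_telescope x : run_end x + run_inner x.+1 = run_start x + run_inner x.
Proof.
rewrite /run_end /run_start /run_inner (_ : prev_mem x.+1 = D x) //.
case Dx: (D x) => //=; case: (D x.+1); rewrite ?gapcount_succ //=;
  by case: (f x == k); case: (prev_mem x).
Qed.

Lemma count_gen_of_height N :
  count mgen_of_height (iota 0 N) + mgen_inner N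
  = count ngen_of_height (iota 0 N) + run_inner N.
Proof.
rewrite (count_add_pred mgen_of_heightE) (count_add_pred ngen_of_heightE).
have tel_run : count run_end (iota 0 N) + run_inner N = count run_start (iota 0 N).
  by rewrite (count_iota_telescope run_end_telescope) /run_inner andbF addn0.
have tel_inner : count mgen_inner (iota 0 N) + mgen_inner N = count ngen_inner (iota 0 N).
  by rewrite (count_iota_telescope (fun x => addnC (mgen_inner x) _)) addn0.
lia.
Qed.

Lemma count_gen_of_height_conductor N :
  D 0 -> 0 < k -> n * n.-1 < N ->
  count mgen_of_height (iota 0 N) = count ngen_of_height (iota 0 N).
Proof.
move=> D0 k_gt0 lt_N; have := count_gen_of_height N.
have le_N1 : n * n.-1 <= N.-1 by rewrite -ltnS prednK // (leq_ltn_trans _ lt_N).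
rewrite /mgen_inner /ngen_inner /run_inner (leq_ltn_trans _ lt_N) //=.
rewrite (gapcount_conductor D0 le_N1) (gapcount_conductor D0 (ltnW lt_N)).
by rewrite eq_sym (gtn_eqF k_gt0) !andbF !addn0.
Qed.

End Runs.

Theorem mainTheorem6 (n : nat) (D : pred nat) :
  0 < n ->
  is_semimodule n.+1 n D ->
  zero_normalized D ->
  G_m n.+1 n D = G_n n.+1 n D.
Proof.
move=> n_gt0 HD D0; rewrite /G_m /G_n.
have -> : [seq gapcount D n.+1 b | b <- gens n.+1 n D n]
        = [seq gapcount D n b | b <- gens n.+1 n D n].
  by apply/eq_in_map => b; rewrite mem_filter => /andP[/andP[Db _] _];
    apply: gapcount_Sn.
apply: partition_of_eq => k k_gt0; rewrite !count_map !count_filter.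
have lt_conductor : n * n.-1 < n.+1 * n by rewrite [n.+1 * n]mulnC ltn_pmul2l // ltnS leq_pred.
move: (count_gen_of_height_conductor HD D0 k_gt0 lt_conductor).
by congr (_ = _); apply: eq_count => x; exact: andbC.
Qed.
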